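(* Fix $p$ with $\tfrac{1}{2}<p<1$ and put $r=\dfrac{1-p}{p}$. Define the sequence $(a_k)_{k\ge 0}$ by $a_0=0$ and $a_k=(1-p)+p\,a_{k-1}^2$ for $k\geq 1$. Then $\lim_{k\to\infty}a_k=r$, and the limit \[ \lim_{k\to\infty}\frac{r-a_k}{(2\,r\,p)^k} \] exists and satisfies \[ 0<\lim_{k\to\infty}\frac{r-a_k}{(2\,r\,p)^k}=r\prod_{j=0}^{\infty}\frac{r+a_j}{2r}<1 . \]
   Context: Here $2rp=2(1-p)$. This recurrence arises in the study of random Galton–Watson binary tree heights. *)

From Stdlib Require Import Reals.
From Coquelicot Require Import Coquelicot.
Open Scope R_scope.

Fixpoint a_seq (p : R) (k : nat) : R :=
  match k with
  | O => 0
  | S k' => (1 - p) + p * (a_seq p k') ^ 2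
  end.

Fixpoint partial_prod (f : nat -> R) (n : nat) : R :=
  match n with
  | O => 1
  | S n' => partial_prod f n' * f n'
  end.

(* With [r = (1-p)/p] and [q = 2 r p = 2 (1-p) < 1], the recurrence gives
   [r - a_(k+1) = q * ((r + a_k) / (2r)) * (r - a_k)], hence
   [r - a_k = r q^k prod_(j<k) (r + a_j) / (2r)].  Since [0 <= a_j <= r], the
   factors lie in [(0, 1]], so the partial products decrease; and the identity
   itself gives [r - a_j <= r q^j], i.e. every factor is at least [1 - q^j / 2].
   As [sum q^j] converges, the product is bounded below by a positive constant,
   so it converges to some [P] in [(0, 1]], and everything follows. *)

From Stdlib Require Import Reals Lra.
From Coquelicot Require Import Coquelicot.
Open Scope R_scope.

Lemma pow_le_one (x : R) (n : nat) : 0 <= x <= 1 -> x ^ n <= 1.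
Proof.
  intros hx. rewrite <- (pow1 n). apply pow_incr. exact hx.
Qed.

Lemma exp_opp_le_1_sub_half (x : R) : 0 <= x <= 1 -> exp (- x) <= 1 - x / 2.
Proof.
  intros hx. rewrite exp_Ropp.
  assert (hexp : 1 + x <= exp x) by apply exp_ineq1_le.
  assert (hpos : 0 < exp x) by apply exp_pos.
  apply (Rmult_le_reg_l (exp x)); [exact hpos|].
  rewrite Rinv_r by lra. nra.
Qed.

Section PartialProducts.

Variable f : nat -> R.

Lemma partial_prod_recurrence (u : nat -> R) (c : R) :
  (forall k, u (S k) = c * f k * u k) ->
  forall k, u k = u O * c ^ k * partial_prod f k.
Proof.
  intros hu k. induction k as [|k IH]; simpl.
  - ring.
  - rewrite hu, IH. ring.
Qed.

Hypothesis f_le_1 : forall j, f j <= 1.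
Hypothesis f_pos : forall j, 0 < f j.

Lemma partial_prod_pos (n : nat) : 0 < partial_prod f n.
Proof.
  induction n as [|n IH]; simpl; [lra|].
  apply Rmult_lt_0_compat; [exact IH | apply f_pos].
Qed.

Lemma partial_prod_le_1 (n : nat) : partial_prod f n <= 1.
Proof.
  induction n as [|n IH]; simpl; [lra|].
  rewrite <- (Rmult_1_r 1). apply Rmult_le_compat.
  - left. apply partial_prod_pos.
  - left. apply f_pos.
  - exact IH.
  - apply f_le_1.
Qed.

Lemma partial_prod_decr (n : nat) : partial_prod f (S n) <= partial_prod f n.
Proof.
  simpl. rewrite <- (Rmult_1_r (partial_prod f n)) at 2.
  apply Rmult_le_compat_l; [left; apply partial_prod_pos | apply f_le_1].
Qed.

Variable q : R.
Hypothesis q_ge_0 : 0 <= q.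
Hypothesis q_lt_1 : q < 1.
Hypothesis f_ge_geom : forall j, 1 - q ^ j / 2 <= f j.

Lemma partial_prod_ge_exp (n : nat) :
  exp (- ((1 - q ^ n) / (1 - q))) <= partial_prod f n.
Proof.
  induction n as [|n IH]; simpl.
  - replace (- ((1 - 1) / (1 - q))) with 0 by (field; lra).
    rewrite exp_0. lra.
  - assert (hqn : 0 <= q ^ n <= 1) by
      (split; [apply pow_le | apply pow_le_one]; lra).
    replace (- ((1 - q * q ^ n) / (1 - q)))
      with (- ((1 - q ^ n) / (1 - q)) + - q ^ n) by (field; lra).
    rewrite exp_plus.
    apply Rmult_le_compat.
    + left. apply exp_pos.
    + left. apply exp_pos.
    + exact IH.
    + apply Rle_trans with (1 - q ^ n / 2);
        [apply exp_opp_le_1_sub_half; exact hqn | apply f_ge_geom].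
Qed.

Lemma partial_prod_converges :
  exists P : R, is_lim_seq (partial_prod f) P /\ 0 < P <= 1.
Proof.
  set (m := exp (- / (1 - q))).
  assert (hm : 0 < m) by apply exp_pos.
  assert (hlow : forall n, m <= partial_prod f n).
  { intro n. apply Rle_trans with (2 := partial_prod_ge_exp n).
    assert (hqn : 0 <= q ^ n / (1 - q)) by
      (apply Rdiv_le_0_compat; [apply pow_le | ]; lra).
    assert (hexp : - / (1 - q) <= - ((1 - q ^ n) / (1 - q))).
    { replace (- ((1 - q ^ n) / (1 - q))) with (- / (1 - q) + q ^ n / (1 - q))
        by (field; lra).
      lra. }
    destruct (Rle_lt_or_eq_dec _ _ hexp) as [hlt | heq].
    + left. apply exp_increasing. exact hlt.
    + unfold m. rewrite heq. lra. }
  destruct (ex_finite_lim_seq_decr _ m partial_prod_decr hlow) as [P hP].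
  exists P. split; [exact hP | split].
  - assert (h := is_lim_seq_le _ _ _ _ hlow (is_lim_seq_const m) hP).
    exact (Rlt_le_trans _ _ _ hm h).
  - exact (is_lim_seq_le _ _ _ _ partial_prod_le_1 hP (is_lim_seq_const 1)).
Qed.

End PartialProducts.

Section Recurrence.

Variables p r : R.
Hypothesis p_gt_half : 1 / 2 < p.
Hypothesis p_lt_1 : p < 1.
Hypothesis r_def : r = (1 - p) / p.

Definition a_seq_factor (j : nat) : R := (r + a_seq p j) / (2 * r).

Lemma r_pos : 0 < r.
Proof. rewrite r_def. apply Rdiv_lt_0_compat; lra. Qed.

Lemma two_r_p_eq : 2 * r * p = 2 * (1 - p).
Proof. rewrite r_def. field. lra. Qed.

Lemma r_fixed_point : 1 - p + p * r ^ 2 = r.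
Proof. rewrite r_def. field. lra. Qed.

Lemma a_seq_bounds (k : nat) : 0 <= a_seq p k <= r.
Proof.
  pose proof r_pos as hr.
  induction k as [|k IH]; simpl; [lra|].
  rewrite Rmult_1_r. split.
  - assert (0 <= a_seq p k * a_seq p k) by apply Rle_0_sqr. nra.
  - rewrite <- r_fixed_point. simpl. rewrite Rmult_1_r.
    assert (a_seq p k * a_seq p k <= r * r) by (apply Rmult_le_compat; lra).
    nra.
Qed.

Lemma r_sub_a_seq_succ (k : nat) :
  r - a_seq p (S k) = 2 * r * p * a_seq_factor k * (r - a_seq p k).
Proof.
  pose proof r_pos as hr. pose proof r_fixed_point as hfix.
  replace (2 * r * p * a_seq_factor k) with (p * (r + a_seq p k))
    by (unfold a_seq_factor; field; lra).
  simpl. simpl in hfix. rewrite <- hfix at 1. ring.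
Qed.

Lemma r_sub_a_seq_eq (k : nat) :
  r - a_seq p k = r * (2 * r * p) ^ k * partial_prod a_seq_factor k.
Proof.
  rewrite (partial_prod_recurrence a_seq_factor (fun k => r - a_seq p k) _
             r_sub_a_seq_succ k).
  simpl. ring.
Qed.

Lemma a_seq_factor_le_1 (j : nat) : a_seq_factor j <= 1.
Proof.
  pose proof r_pos. pose proof (a_seq_bounds j).
  unfold a_seq_factor, Rdiv. rewrite <- (Rinv_r (2 * r)) by lra.
  apply Rmult_le_compat_r; [left; apply Rinv_0_lt_compat |]; lra.
Qed.

Lemma a_seq_factor_pos (j : nat) : 0 < a_seq_factor j.
Proof.
  pose proof r_pos. pose proof (a_seq_bounds j).
  unfold a_seq_factor. apply Rdiv_lt_0_compat; lra.
Qed.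

Lemma a_seq_factor_ge_geom (j : nat) : 1 - (2 * r * p) ^ j / 2 <= a_seq_factor j.
Proof.
  pose proof r_pos as hr.
  assert (hqj : 0 <= (2 * r * p) ^ j) by (apply pow_le; rewrite two_r_p_eq; lra).
  assert (hgap : r - a_seq p j <= r * (2 * r * p) ^ j).
  { rewrite r_sub_a_seq_eq.
    pose proof (partial_prod_le_1 _ a_seq_factor_le_1 a_seq_factor_pos j).
    assert (0 <= r * (2 * r * p) ^ j) by (apply Rmult_le_pos; lra).
    nra. }
  assert (hfac : a_seq_factor j * (2 * r) = r + a_seq p j)
    by (unfold a_seq_factor; field; lra).
  apply (Rmult_le_reg_r (2 * r)); [lra|].
  rewrite hfac. nra.
Qed.

End Recurrence.

Theorem mainTheorem1 (p : R) (hp1 : 1/2 < p) (hp2 : p < 1) :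
  let r := (1 - p) / p in
  is_lim_seq (a_seq p) r /\
  exists L P : R,
    is_lim_seq (fun k => (r - a_seq p k) / (2 * r * p) ^ k) L /\
    is_lim_seq (partial_prod (fun j => (r + a_seq p j) / (2 * r))) P /\
    L = r * P /\ 0 < L /\ L < 1.
Proof.
  intros r.
  assert (r_eq : r = (1 - p) / p) by reflexivity.
  pose proof (r_pos p r hp1 hp2 r_eq) as hr.
  pose proof (two_r_p_eq p r hp1 r_eq) as hq.
  pose proof (r_sub_a_seq_eq p r hp1 hp2 r_eq) as hgap.
  change (fun j => (r + a_seq p j) / (2 * r)) with (a_seq_factor p r).
  destruct (partial_prod_converges _ (a_seq_factor_le_1 p r hp1 hp2 r_eq)
              (a_seq_factor_pos p r hp1 hp2 r_eq) (2 * r * p) ltac:(lra) ltac:(lra)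
              (a_seq_factor_ge_geom p r hp1 hp2 r_eq)) as [P [hP [hP0 hP1]]].
  assert (hgeom : is_lim_seq (fun k => (2 * r * p) ^ k) 0)
    by (apply is_lim_seq_geom; rewrite Rabs_pos_eq; lra).
  split.
  - apply (is_lim_seq_ext
             (fun k => r - r * ((2 * r * p) ^ k * partial_prod (a_seq_factor p r) k))).
    { intro k. rewrite <- Rmult_assoc, <- hgap. ring. }
    replace (Finite r) with (Finite (r - r * (0 * P))) by (f_equal; ring).
    apply is_lim_seq_minus'; [apply is_lim_seq_const|].
    apply is_lim_seq_mult'; [apply is_lim_seq_const|].
    exact (is_lim_seq_mult' _ _ _ _ hgeom hP).
  - exists (r * P), P. repeat split; [| exact hP | nra | nra].
    apply (is_lim_seq_ext (fun k => r * partial_prod (a_seq_factor p r) k)).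
    { intro k. rewrite hgap. field. apply pow_nonzero. lra. }
    exact (is_lim_seq_mult' _ _ _ _ (is_lim_seq_const r) hP).
Qed.
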